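(* Let $\varphi\colon G\to G$ and $\psi\colon H\to H$ be endomorphisms of abelian groups and let $\varphi\oplus\psi\colon G\oplus H\to G\oplus H$ be given by $(\varphi\oplus\psi)(g,h)=(\varphi g,\psi h)$. Then $\varphi\oplus\psi$ is positively expansive if and only if both $\varphi$ and $\psi$ are positively expansive. Analogously, if $\varphi$ and $\psi$ are automorphisms, then $\varphi\oplus\psi$ is expansive if and only if both $\varphi$ and $\psi$ are expansive.
   Context: $\mathbb N=\{0,1,2,\dots\}$. An endomorphism $\varphi$ of an abelian group $G$ is positively expansive if there is a finite subgroup $S\leq G$ such that for every finite subgroup $F\leq G$ there is $n\in\mathbb N$ with $F\subseteq\sum_{k=0}^n\varphi^kS$. An automorphism $\varphi$ is expansive if there is a finite subgroup $S\leq G$ such that for every finite subgroup $F\leq G$ there is $n\in\mathbb N$ with $F\subseteq\sum_{|k|\leq n}\varphi^kS$. *)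

From mathcomp Require Import all_boot all_order all_algebra.
Set Implicit Arguments. Unset Strict Implicit. Unset Printing Implicit Defensive.
Import GRing.Theory.
Local Open Scope ring_scope.

Definition is_subgroup (G : zmodType) (S : G -> Prop) : Prop :=
  S 0 /\ (forall x y, S x -> S y -> S (x - y)).

Definition finite_pred (G : zmodType) (S : G -> Prop) : Prop :=
  exists s : seq G, forall x, S x -> x \in s.

Definition finite_subgroup (G : zmodType) (S : G -> Prop) : Prop :=
  is_subgroup S /\ finite_pred S.

Definition in_pos_sum (G : zmodType) (phi : G -> G) (S : G -> Prop)
    (n : nat) (x : G) : Prop :=
  exists f : nat -> G, (forall k, (k <= n)%N -> S (f k)) /\
    x = \sum_(k < n.+1) iter k phi (f k).

(* x lies in  sum_{|k| <= n} phi^k S, for phi an automorphism;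
   phi^{-k} S is the image of S under phi^{-k}, i.e. the preimage of S
   under phi^k. *)
Definition in_sym_sum (G : zmodType) (phi : G -> G) (S : G -> Prop)
    (n : nat) (x : G) : Prop :=
  exists f g : nat -> G,
    (forall k, (k <= n)%N -> S (f k)) /\
    (forall k, (1 <= k <= n)%N -> S (iter k phi (g k))) /\
    x = \sum_(k < n.+1) iter k phi (f k) + \sum_(1 <= k < n.+1) g k.

Definition pos_expansive (G : zmodType) (phi : G -> G) : Prop :=
  exists S : G -> Prop, finite_subgroup S /\
    forall F : G -> Prop, finite_subgroup F ->
      exists n : nat, forall x, F x -> in_pos_sum phi S n x.

Definition expansive (G : zmodType) (phi : G -> G) : Prop :=
  exists S : G -> Prop, finite_subgroup S /\
    forall F : G -> Prop, finite_subgroup F ->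
      exists n : nat, forall x, F x -> in_sym_sum phi S n x.

Definition dsum_map (G H : zmodType) (phi : G -> G) (psi : H -> H)
    : G * H -> G * H := fun p => (phi p.1, psi p.2).

(** Both notions rest on three properties of the sets [sum_(k <= n) phi^k S]
    (and their two-sided analogues): an additive map intertwining two
    endomorphisms carries one family into the other, they grow with [n], and
    for [phi (+) psi] and [S1 * S2] they are the products of the sets for
    [phi, S1] and [psi, S2].  A finite [F <= G] sits in [G (+) H] as [F * 0];
    projecting its covering by [phi (+) psi]-translates of [S] gives a covering
    by [phi]-translates of the first projection of [S].  Conversely [S1 * S2]
    works for [phi (+) psi]: a finite [F] is covered at the larger of the radii
    needed for its two projections. *)

From mathcomp Require Import all_boot all_order all_algebra.
From mathcomp Require Import classical_sets.
Set Implicit Arguments. Unset Strict Implicit. Unset Printing Implicit Defensive.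
Import GRing.Theory.
Local Open Scope ring_scope.
Local Open Scope classical_set_scope.

Section FiniteSubgroups.
Variables G H : zmodType.

Lemma finite_subgroup0 : finite_subgroup [set 0 : G].
Proof.
split; first by split=> // x y -> ->; rewrite subr0.
by exists [:: 0] => x ->; rewrite inE.
Qed.

Lemma finite_subgroupX (A : set G) (B : set H) :
  finite_subgroup A -> finite_subgroup B -> finite_subgroup (A `*` B).
Proof.
move=> [[A0 AB] [s sA]] [[B0 BB] [t tB]]; split; first split.
- by split.
- by move=> x y [Ax1 Bx2] [Ay1 By2]; split; [exact: AB | exact: BB].
exists [seq (a, b) | a <- s, b <- t] => -[a b] [/= Aa Bb].
by apply: allpairs_f; [exact: sA | exact: tB].
Qed.

Lemma finite_subgroup_image (f : {additive G -> H}) (S : set G) :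
  finite_subgroup S -> finite_subgroup (f @` S).
Proof.
move=> [[S0 SB] [s sS]]; split; first split.
- by exists 0; rewrite ?raddf0.
- by move=> _ _ [x Sx <-] [y Sy <-]; exists (x - y); rewrite ?raddfB //; exact: SB.
by exists (map f s) => _ [x Sx <-]; apply: map_f; exact: sS.
Qed.

End FiniteSubgroups.

Lemma iter_semiconj (T U : Type) (f : T -> U) (phi : T -> T) (phi' : U -> U) :
  f \o phi =1 phi' \o f -> forall k x, f (iter k phi x) = iter k phi' (f x).
Proof. by move=> fphi; elim=> //= k IHk x; rewrite -IHk; exact: fphi. Qed.

Lemma iter_dsum_map (G H : zmodType) (phi : G -> G) (psi : H -> H) k p :
  iter k (dsum_map phi psi) p = (iter k phi p.1, iter k psi p.2).
Proof. by elim: k => [|k IHk] /=; [case: p | rewrite IHk]. Qed.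

Lemma iter_raddf0 (G : zmodType) (phi : {additive G -> G}) k : iter k phi 0 = 0.
Proof. by elim: k => //= k ->; rewrite raddf0. Qed.

Lemma sum_pair (G H : zmodType) I (r : seq I) (P : pred I) (F1 : I -> G) (F2 : I -> H) :
  (\sum_(i <- r | P i) F1 i, \sum_(i <- r | P i) F2 i) = \sum_(i <- r | P i) (F1 i, F2 i).
Proof.
by rewrite [RHS]surjective_pairing (raddf_sum fst) (raddf_sum snd).
Qed.

Section SpanSets.
Variables (G H : zmodType) (f : {additive G -> H}).
Variables (phi : G -> G) (phi' : H -> H).
Hypothesis f_semiconj : f \o phi =1 phi' \o f.

Lemma in_pos_sum_image S n x :
  in_pos_sum phi S n x -> in_pos_sum phi' (f @` S) n (f x).
Proof.
move=> [g [Sg ->]]; exists (f \o g); split; first by move=> k /Sg; exists (g k).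
by rewrite raddf_sum; apply: eq_bigr => k _; exact: iter_semiconj.
Qed.

Lemma in_sym_sum_image S n x :
  in_sym_sum phi S n x -> in_sym_sum phi' (f @` S) n (f x).
Proof.
move=> [g [h [Sg [Sh ->]]]]; exists (f \o g), (f \o h); split; last split.
- by move=> k /Sg; exists (g k).
- by move=> k /Sh Sk; exists (iter k phi (h k)); rewrite ?(iter_semiconj f_semiconj).
rewrite raddfD !raddf_sum; congr (_ + _); apply: eq_bigr => k _.
exact: iter_semiconj.
Qed.

End SpanSets.

Section SpanWiden.
Variables (G : zmodType) (phi : {additive G -> G}) (S : set G).
Hypothesis S0 : S 0.

Lemma sum_iter_widen n m (g : nat -> G) : (n <= m)%N ->
  \sum_(k < n.+1) iter k phi (g k) =
  \sum_(k < m.+1) iter k phi (if (k <= n)%N then g k else 0).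
Proof.
move=> le_nm; rewrite (big_ord_widen m.+1 (fun k => iter k phi (g k)) (le_nm : (n.+1 <= m.+1)%N)).
rewrite big_mkcond; apply: eq_bigr => k _.
by rewrite ltnS; case: ifP => // _; rewrite iter_raddf0.
Qed.

Lemma in_pos_sum_widen n m x :
  (n <= m)%N -> in_pos_sum phi S n x -> in_pos_sum phi S m x.
Proof.
move=> le_nm [g [Sg ->]]; exists (fun k => if (k <= n)%N then g k else 0).
by split; [move=> k _; case: ifP => // /Sg | exact: sum_iter_widen].
Qed.

Lemma in_sym_sum_widen n m x :
  (n <= m)%N -> in_sym_sum phi S n x -> in_sym_sum phi S m x.
Proof.
move=> le_nm [g [h [Sg [Sh ->]]]].
exists (fun k => if (k <= n)%N then g k else 0),
       (fun k => if (k <= n)%N then h k else 0); split; last split.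
- by move=> k _; case: ifP => // /Sg.
- move=> k /andP[k_gt0 _]; case: ifP => [le_kn|_]; last by rewrite iter_raddf0.
  by apply: Sh; rewrite k_gt0 le_kn.
congr (_ + _); first exact: sum_iter_widen.
rewrite (@big_cat_nat _ _ _ n.+1 1 m.+1) //= [X in _ = _ + X]big_nat_cond.
rewrite [X in _ = _ + X]big1 ?addr0; last first.
  by move=> k /andP[/andP[lt_nk _] _]; rewrite leqNgt lt_nk.
by apply: eq_big_nat => k /andP[_]; rewrite ltnS => ->.
Qed.

End SpanWiden.

Section SpanDsum.
Variables (G H : zmodType) (phi : G -> G) (psi : H -> H).
Variables (S1 : set G) (S2 : set H).

Lemma in_pos_sum_dsum n a b :
  in_pos_sum phi S1 n a -> in_pos_sum psi S2 n b ->
  in_pos_sum (dsum_map phi psi) (S1 `*` S2) n (a, b).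
Proof.
move=> [g1 [Sg1 ->]] [g2 [Sg2 ->]]; exists (fun k => (g1 k, g2 k)); split.
  by move=> k le_kn; split; [exact: Sg1 | exact: Sg2].
by rewrite sum_pair; apply: eq_bigr => k _; rewrite iter_dsum_map.
Qed.

Lemma in_sym_sum_dsum n a b :
  in_sym_sum phi S1 n a -> in_sym_sum psi S2 n b ->
  in_sym_sum (dsum_map phi psi) (S1 `*` S2) n (a, b).
Proof.
move=> [g1 [h1 [Sg1 [Sh1 ->]]]] [g2 [h2 [Sg2 [Sh2 ->]]]].
exists (fun k => (g1 k, g2 k)), (fun k => (h1 k, h2 k)); split; last split.
- by move=> k le_kn; split; [exact: Sg1 | exact: Sg2].
- by move=> k kn; rewrite iter_dsum_map; split; [exact: Sh1 | exact: Sh2].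
by rewrite -!sum_pair /=; congr (_ + _, _ + _);
  rewrite ?(raddf_sum fst) ?(raddf_sum snd); apply: eq_bigr => k _; rewrite iter_dsum_map.
Qed.

End SpanDsum.

Section ExpansiveDsum.
Variable span : forall G : zmodType, (G -> G) -> set G -> nat -> G -> Prop.

Hypothesis span_image : forall (G H : zmodType) (f : {additive G -> H})
    (phi : G -> G) (phi' : H -> H), f \o phi =1 phi' \o f ->
  forall S n x, span phi S n x -> span phi' (f @` S) n (f x).

Hypothesis span_widen : forall (G : zmodType) (phi : {additive G -> G}) S,
  S 0 -> forall n m x, (n <= m)%N -> span phi S n x -> span phi S m x.

Hypothesis span_dsum : forall (G H : zmodType) (phi : G -> G) (psi : H -> H)
    S1 S2 n a b, span phi S1 n a -> span psi S2 n b ->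
  span (dsum_map phi psi) (S1 `*` S2) n (a, b).

Definition expansive_for (G : zmodType) (phi : G -> G) : Prop :=
  exists S : set G, finite_subgroup S /\
    forall F : set G, finite_subgroup F ->
      exists n : nat, forall x, F x -> span phi S n x.

Variables (G H : zmodType) (phi : {additive G -> G}) (psi : {additive H -> H}).

Lemma expansive_for_dsum_fst :
  expansive_for (dsum_map phi psi) -> expansive_for phi.
Proof.
move=> [S [finS spanS]]; exists (fst @` S).
split=> [|F finF]; first exact: finite_subgroup_image.
have [n spanF] := spanS _ (finite_subgroupX finF (finite_subgroup0 H)).
exists n => x Fx; exact: (span_image (f := fst) _ (spanF (x, 0) (conj Fx erefl))).
Qed.

Lemma expansive_for_dsum_snd :
  expansive_for (dsum_map phi psi) -> expansive_for psi.
Proof.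
move=> [S [finS spanS]]; exists (snd @` S).
split=> [|F finF]; first exact: finite_subgroup_image.
have [n spanF] := spanS _ (finite_subgroupX (finite_subgroup0 G) finF).
exists n => x Fx; exact: (span_image (f := snd) _ (spanF (0, x) (conj erefl Fx))).
Qed.

Lemma expansive_for_dsum :
  expansive_for phi -> expansive_for psi -> expansive_for (dsum_map phi psi).
Proof.
move=> [S1 [finS1 spanS1]] [S2 [finS2 spanS2]]; exists (S1 `*` S2).
split=> [|F finF]; first exact: finite_subgroupX.
have [n1 spanF1] := spanS1 _ (finite_subgroup_image fst finF).
have [n2 spanF2] := spanS2 _ (finite_subgroup_image snd finF).
exists (maxn n1 n2) => -[a b] Fab; apply: span_dsum.
  by apply: (span_widen finS1.1.1 (leq_maxl n1 n2)); apply: spanF1; exists (a, b).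
by apply: (span_widen finS2.1.1 (leq_maxr n1 n2)); apply: spanF2; exists (a, b).
Qed.

Lemma expansive_for_dsumE :
  expansive_for (dsum_map phi psi) <-> expansive_for phi /\ expansive_for psi.
Proof.
split=> [expD | [expphi exppsi]]; last exact: expansive_for_dsum.
by split; [exact: expansive_for_dsum_fst expD | exact: expansive_for_dsum_snd expD].
Qed.

End ExpansiveDsum.

Theorem proposition2p7 (G H : zmodType)
  (phi : {additive G -> G}) (psi : {additive H -> H}) :
  (pos_expansive (dsum_map phi psi) <-> pos_expansive phi /\ pos_expansive psi) /\
  (bijective phi -> bijective psi ->
   (expansive (dsum_map phi psi) <-> expansive phi /\ expansive psi)).
Proof.
split; first exact: (expansive_for_dsumE
  in_pos_sum_image in_pos_sum_widen in_pos_sum_dsum).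
move=> _ _; exact: (expansive_for_dsumE
  in_sym_sum_image in_sym_sum_widen in_sym_sum_dsum).
Qed.
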